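(* Let $X$ be the vertex set of a connected simplicial graph with bounded geometry, equipped with the shortest path metric, which is $\delta$-hyperbolic, and fix $e\in X$ and $p\geq 1$. For $x\in X$, $k\in\mathbb{N}$, $n\in\mathbb{N}\setminus\{0\}$, let $F_{x,k,n}$ be the set of all points of $X\setminus B(e;3\delta)$ lying on $g([n,2n])$ for some geodesic $g$ from some $y$ with $d(x,y)\leq k$ to $e$ (parametrised by arc length starting at $y$), and let $F(x,k,n)\in\ell^p(X)$ be the characteristic function of $F_{x,k,n}$. Then there exists a constant $C$ such that for all $x\in X$, all $n\in\mathbb{N}\setminus\{0\}$ and all $k\leq \frac{n}{4}$, \[ \|F(x,k,n)\|_p^p\leq Cn, \] and if in addition $d(x,e)\geq 2n$, then $n-3\delta\leq \|F(x,k,n)\|_p^p$.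
   Context: Bounded geometry: for every $r$ there is a uniform bound on the cardinality of balls of radius $r$. $\delta$-hyperbolicity in the Rips sense: each side of a geodesic triangle lies in the $\delta$-neighbourhood of the union of the other two. *)

From HB Require Import structures.
From mathcomp Require Import all_boot all_order all_algebra.
From mathcomp Require Import all_classical all_reals all_analysis.
Set Implicit Arguments. Unset Strict Implicit. Unset Printing Implicit Defensive.
Import Order.TTheory GRing.Theory Num.Theory.
Local Open Scope classical_set_scope.
Local Open Scope ring_scope.

Section Defs.
Context {V : choiceType}.

Definition simplicial_graph (adj : V -> V -> Prop) : Prop :=
  (forall x y, adj x y -> adj y x) /\ (forall x, ~ adj x x).

Inductive walk (adj : V -> V -> Prop) : V -> V -> nat -> Prop :=
| walk0 x : walk adj x x 0
| walkS x z y n : adj x z -> walk adj z y n -> walk adj x y n.+1.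

(* d is the shortest path metric of the graph; this also forces connectedness *)
Definition graph_dist (adj : V -> V -> Prop) (d : V -> V -> nat) : Prop :=
  forall x y, walk adj x y (d x y) /\ (forall m, walk adj x y m -> (d x y <= m)%N).

Definition connected_graph (adj : V -> V -> Prop) : Prop :=
  forall x y, exists m, walk adj x y m.

Definition bounded_geometry (d : V -> V -> nat) : Prop :=
  forall r : nat, exists N : nat, forall (x : V) (s : seq V),
    uniq s -> (forall y, y \in s -> (d x y <= r)%N) -> (size s <= N)%N.

(* geodesic from y to z, parametrised by arc length starting at y,
   defined on the integer times 0 .. d y z *)
Definition geodesic (d : V -> V -> nat) (y z : V) (g : nat -> V) : Prop :=
  g 0%N = y /\ g (d y z) = z /\
  forall i j, (i <= d y z)%N -> (j <= d y z)%N -> d (g i) (g j) = `|i - j|%N.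

Definition rips_hyperbolic {R : realType} (d : V -> V -> nat) (delta : R) : Prop :=
  forall x y z g1 g2 g3, geodesic d x y g1 -> geodesic d y z g2 -> geodesic d z x g3 ->
  forall i, (i <= d x y)%N ->
    exists j, ((j <= d y z)%N /\ ((d (g1 i) (g2 j))%:R <= delta))
           \/ ((j <= d z x)%N /\ ((d (g1 i) (g3 j))%:R <= delta)).

Definition Fset {R : realType} (d : V -> V -> nat) (delta : R) (e x : V) (k n : nat) : set V :=
  [set z | ~ ((d e z)%:R <= 3 * delta) /\
     exists y g t, (d x y <= k)%N /\ geodesic d y e g /\
       (n <= t)%N /\ (t <= 2 * n)%N /\ (t <= d y e)%N /\ z = g t].

Definition lp_norm_pow {R : realType} (p : R) (f : V -> R) : \bar R :=
  \esum_(z in [set: V]) ((`|f z| `^ p)%:E).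

End Defs.

From HB Require Import structures.
From mathcomp Require Import all_boot all_order all_algebra.
From mathcomp Require Import all_classical all_reals all_analysis.
From mathcomp Require Import zify.
Set Implicit Arguments. Unset Strict Implicit.

(* A point [z = g t] of [F_{x,k,n}] lies on a geodesic [g] from some [y] near [x] to [e],
   at distance [t] in [[n, 2n]] from [y]. Thinness of a geodesic triangle [(y, e, x)]
   puts [z] within [delta] either of the side [[x, y]], which forces [z] close to [x]
   since [k <= n/4], or of a fixed geodesic from [e] to [x] at a point within
   [3n + delta] of [x]. Hence [F_{x,k,n}] is covered by [O(n)] balls of a fixed radius,
   each of uniformly bounded cardinality. Conversely, if [d(x,e) >= 2n], the points
   [g t], [n <= t < 2n - 3 delta], of a geodesic [g] from [x] to [e] all lie in
   [F_{x,k,n}]. *)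
Import Order.TTheory GRing.Theory Num.Theory.
Local Open Scope classical_set_scope.
Local Open Scope ring_scope.

Section Walks.
Variables (V : choiceType) (adj : V -> V -> Prop).

Lemma walk_cat x y z m n :
  walk adj x y m -> walk adj y z n -> walk adj x z (m + n).
Proof.
elim=> [//|a b c k Hab _ IH] Hyz.
by rewrite addSn; apply: walkS Hab (IH Hyz).
Qed.

Lemma walk_rev x y m :
  (forall a b, adj a b -> adj b a) -> walk adj x y m -> walk adj y x m.
Proof.
move=> adjC; elim=> [a|a b c k Hab _ IH]; first exact: walk0.
by rewrite -addn1; apply: walk_cat IH (walkS (adjC _ _ Hab) (walk0 _ _)).
Qed.

Lemma walk_inv x y m : walk adj x y m ->
  match m with 0 => x = y | k.+1 => exists2 w, adj x w & walk adj w y k end.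
Proof. by case=> // a b c k Hab Hw; exists b. Qed.

End Walks.

Section GraphDistance.
Variables (V : choiceType) (adj : V -> V -> Prop) (d : V -> V -> nat).
Hypotheses (adj_simpl : simplicial_graph adj) (dP : graph_dist adj d).

Lemma dist_xx x : d x x = 0%N.
Proof. by apply/eqP; rewrite -leqn0; apply: (dP x x).2; exact: walk0. Qed.

Lemma distC x y : d x y = d y x.
Proof.
have walk_sym a b : (d b a <= d a b)%N.
  by apply: (dP b a).2; apply: walk_rev adj_simpl.1 (dP a b).1.
by apply/eqP; rewrite eqn_leq !walk_sym.
Qed.

Lemma dist_triangle x y z : (d x z <= d x y + d y z)%N.
Proof. by apply: (dP x z).2; apply: walk_cat (dP x y).1 (dP y z).1. Qed.

Lemma dist_eq0 x y : d x y = 0%N -> x = y.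
Proof. by move=> dxy; have := walk_inv (dP x y).1; rewrite dxy. Qed.

Lemma dist_step y z m : d y z = m.+1 -> exists2 w, (d y w <= 1)%N & d w z = m.
Proof.
move=> dyz; have := walk_inv (dP y z).1; rewrite dyz => -[w Hyw Hwz].
exists w; first by apply: (dP y w).2; apply: walkS Hyw (walk0 _ _).
have : (d y z <= 1 + d w z)%N by apply: (dP y z).2; apply: walkS Hyw (dP w z).1.
by have := (dP w z).2 _ Hwz; lia.
Qed.

Lemma geodesic_cons y w z g : (d y w <= 1)%N -> d y z = (d w z).+1 ->
  geodesic d w z g -> geodesic d y z (fun i => if i is i'.+1 then g i' else y).
Proof.
move=> dyw dyz [g0 [gz gd]]; rewrite /geodesic dyz; split=> //; split=> //.
have dy_g j : (j <= d w z)%N -> d y (g j) = j.+1.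
  move=> jle; have dgz := gd j _ jle (leqnn _); rewrite gz in dgz.
  have := dist_triangle y (g j) z; have := dist_triangle y w (g j).
  by rewrite -{2}g0 gd //; lia.
case=> [|i] [|j] ile jle /=; first by rewrite dist_xx.
- by rewrite dy_g //; lia.
- by rewrite distC dy_g //; lia.
- by rewrite gd //; lia.
Qed.

Lemma geodesic_exists y z : exists g, geodesic d y z g.
Proof.
move: {2}(d y z) (erefl (d y z)) => m; elim: m y => [|m IH] y dyz.
  exists (fun=> y); rewrite /geodesic dyz -(dist_eq0 dyz); split=> //; split=> // i j.
  by rewrite !leqn0 => /eqP-> /eqP->; rewrite dist_xx.
have [w dyw dwz] := dist_step dyz; have [g gP] := IH w dwz.
by exists (fun i => if i is i'.+1 then g i' else y); apply: (geodesic_cons dyw _ gP); rewrite dwz.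
Qed.

End GraphDistance.

Lemma geodesic_inj (V : choiceType) (d : V -> V -> nat) y z g :
  (forall x, d x x = 0%N) -> geodesic d y z g ->
  {in [pred i | i <= d y z]%N &, injective g}.
Proof.
move=> dxx [_ [_ gd]] i j ile jle gij.
by have := gd i j ile jle; rewrite gij dxx; lia.
Qed.

Lemma rips_hyperbolic_ge0 (R : realType) (V : choiceType) (d : V -> V -> nat)
    (delta : R) (e : V) :
  d e e = 0%N -> rips_hyperbolic d delta -> 0 <= delta.
Proof.
move=> dee thin; have ge : geodesic d e e (fun=> e).
  by rewrite /geodesic dee; split=> //; split=> // i j; rewrite !leqn0 => /eqP-> /eqP->.
by have [j [[_ /(le_trans _)->]|[_ /(le_trans _)->]]] := thin _ _ _ _ _ _ ge ge ge 0%N (leq0n _).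
Qed.

Lemma size_uniq_covered (T : eqType) (d : T -> T -> nat) (r N : nat) :
  (forall x s, uniq s -> (forall y, y \in s -> d x y <= r) -> size s <= N)%N ->
  forall L u, uniq u -> (forall z, z \in u -> has (fun w => d w z <= r)%N L) ->
  (size u <= N * size L)%N.
Proof.
move=> ballN; elim=> [|w L IH] u uu cover.
  by case: u uu cover => // a u _ /(_ a); rewrite inE eqxx => /(_ isT).
set near_w := (fun z => d w z <= r)%N.
rewrite -(count_predC near_w u) /= mulnS; apply: leq_add; rewrite -size_filter.
  by apply: (ballN w); [exact: filter_uniq | move=> y; rewrite mem_filter => /andP[]].
apply: IH; first exact: filter_uniq.
move=> z; rewrite mem_filter => /andP[/= far_w uz].
by have := cover z uz; rewrite /= -/(near_w z) (negbTE far_w).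
Qed.

Section CountingNorm.
Variables (R : realType) (V : choiceType).

Lemma lp_norm_pow_indic (p : R) (F : set V) :
  0 < p -> lp_norm_pow p (\1_F : V -> R) = \esum_(z in F) (1%E : \bar R).
Proof.
move=> p_gt0; rewrite /lp_norm_pow [RHS]esum_mkcond; apply: eq_esum => z _.
by rewrite indicE; case: (z \in F); rewrite /= ?normr1 ?powR1 // normr0 powR0 ?gt_eqF.
Qed.

Lemma sum1_seq (T : Type) (s : seq T) :
  (\sum_(i <- s) (1%E : \bar R) = (size s)%:R%:E)%E.
Proof.
elim: s => [|a s IH]; first by rewrite big_nil.
by rewrite big_cons IH /= -EFinD -natr1 addrC.
Qed.

Lemma esum1_le_uniq (F : set V) (B : nat) :
  (forall u, uniq u -> (forall z, z \in u -> F z) -> (size u <= B)%N) ->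
  (\esum_(z in F) (1%E : \bar R) <= B%:R%:E)%E.
Proof.
move=> sizeB; apply: ge_ereal_sup => _ [X [finX XF] <-].
rewrite fsbig_finite // sum1_seq lee_fin ler_nat.
by apply: sizeB; [exact: finmap.fset_uniq | move=> z; rewrite in_fset_set // inE => /XF].
Qed.

Lemma esum1_ge_uniq (F : set V) (u : seq V) :
  uniq u -> (forall z, z \in u -> F z) ->
  ((size u)%:R%:E <= \esum_(z in F) (1%E : \bar R))%E.
Proof.
move=> uu uF; apply: esum_ge; exists [set` u].
  by split; [exact: finite_seq | move=> z /= /uF].
rewrite fsbig_finite ?finite_seq // sum1_seq lee_fin ler_nat.
by apply: uniq_leq_size => // z zu; rewrite in_fset_set ?finite_seq // inE.
Qed.

End CountingNorm.

Section Fset.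
Variables (R : realType) (V : choiceType) (adj : V -> V -> Prop).
Variables (d : V -> V -> nat) (delta : R) (e : V).
Hypotheses (adj_simpl : simplicial_graph adj) (dP : graph_dist adj d).
Hypothesis thin : rips_hyperbolic d delta.

Let distC := distC adj_simpl dP.
Let dist_triangle := dist_triangle dP.

Section UpperBound.
Variables (D N : nat).
Hypothesis delta_le_D : delta <= D%:R.
Hypothesis ballN : forall x s, uniq s ->
  (forall y, y \in s -> d x y <= 2 * D)%N -> (size s <= N)%N.

Lemma Fset_near x k n g2 z : (4 * k <= n)%N -> geodesic d e x g2 ->
  Fset d delta e x k n z ->
  (d x z <= 2 * D)%N \/ exists2 j, (d e x - (3 * n + D) <= j <= d e x)%N & (d (g2 j) z <= D)%N.
Proof.
move=> kn g2P [_ [y [g [t [dxy [gP [nt [t2n [tye ->]]]]]]]]].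
have [h hP] := geodesic_exists adj_simpl dP x y.
have dyz : d y (g t) = t by case: gP => g0 [_ gd]; rewrite -{1}g0 gd //; lia.
have le_D a b : (d a b)%:R <= delta -> (d a b <= D)%N.
  by move=> dab; rewrite -(ler_nat R); apply: le_trans delta_le_D.
have [j [[jle /le_D near]|[jle /le_D near]]] := thin gP g2P hP tye.
  right; exists j; last by rewrite distC.
  have [_ [g2x g2d]] := g2P; have := g2d j _ jle (leqnn _); rewrite g2x => dx.
  have := dist_triangle (g2 j) (g t) x; have := dist_triangle (g t) y x.
  by rewrite (distC (g2 j) (g t)) (distC (g t) y) (distC y x); lia.
(* [z] is close to the short side [x, y]: then [n <= t <= 2 k + D], so [k <= D / 2]. *)
left; have [h0 [_ hd]] := hP; have := hd 0%N j (leq0n _) jle; rewrite h0 => dxh.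
have := dist_triangle x (h j) (g t); have := dist_triangle y x (g t).
by rewrite (distC y x) (distC (h j) (g t)); lia.
Qed.

Lemma esum_Fset_le x k n : (4 * k <= n)%N ->
  (\esum_(z in Fset d delta e x k n) (1%E : \bar R) <= (N * (3 * n + D + 2))%:R%:E)%E.
Proof.
move=> kn; apply: esum1_le_uniq => u uu uF.
have [g2 g2P] := geodesic_exists adj_simpl dP e x.
set M := (3 * n + D)%N.
set L := x :: [seq g2 j | j <- iota (d e x - M) M.+1].
have -> : (M + 2 = size L)%N by rewrite /= size_map size_iota addn2.
apply: (size_uniq_covered ballN) => // z /uF /(Fset_near kn g2P) [near|[j jle near]].
  by rewrite /= near.
apply/hasP; exists (g2 j); last by lia.
by rewrite inE map_f ?orbT // mem_iota; lia.
Qed.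

End UpperBound.

Lemma Fset_geodesic_point x k n g t : geodesic d x e g ->
  (n <= t <= 2 * n)%N -> (t <= d x e)%N -> 3 * delta < (d x e - t)%:R ->
  Fset d delta e x k n (g t).
Proof.
move=> gP /andP[nt t2n] tle far; split.
  have [_ [ge gd]] := gP; rewrite distC -ge gd //.
  by apply/negP; rewrite -ltNge; apply: lt_le_trans far _; rewrite ler_nat; lia.
by exists x, g, t; rewrite (dist_xx dP).
Qed.

Lemma esum_Fset_ge x k n : (2 * n <= d x e)%N ->
  ((n%:R - 3 * delta)%:E <= \esum_(z in Fset d delta e x k n) (1%E : \bar R))%E.
Proof.
move=> far.
have delta_ge0 := rips_hyperbolic_ge0 (dist_xx dP e) thin.
set K := Num.truncn (3 * delta).
have /andP[K_le K_gt] := truncn_itv (mulr_ge0 (ler0n R 3) delta_ge0).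
have [g gP] := geodesic_exists adj_simpl dP x e.
set u := [seq g t | t <- iota n (n - K)].
have uu : uniq u.
  rewrite map_inj_in_uniq ?iota_uniq // => i j.
  by rewrite !mem_iota => ? ?; apply: (geodesic_inj (dist_xx dP) gP); rewrite inE; lia.
have uF z : z \in u -> Fset d delta e x k n z.
  case/mapP=> t; rewrite mem_iota => /andP[nt tn] ->.
  apply: Fset_geodesic_point => //; try (apply/andP; split); try lia.
  by apply: lt_le_trans K_gt _; rewrite -/K ler_nat; lia.
apply: le_trans (esum1_ge_uniq R uu uF); rewrite size_map size_iota lee_fin.
have [Kn|nK] := leqP K n.
  by rewrite natrB // lerB.
have -> : (n - K)%N = 0%N by lia.
by rewrite subr_le0 (le_trans _ K_le) // ler_nat ltnW.
Qed.

End Fset.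

Theorem lemma3p3 (R : realType) (V : choiceType) (adj : V -> V -> Prop)
  (d : V -> V -> nat) (delta : R) (e : V) (p : R) :
  simplicial_graph adj -> connected_graph adj -> graph_dist adj d ->
  bounded_geometry d -> rips_hyperbolic d delta -> 1 <= p ->
  exists C : R, forall (x : V) (n k : nat), (0 < n)%N -> (4 * k <= n)%N ->
    (lp_norm_pow p (\1_(Fset d delta e x k n) : V -> R) <= (C * n%:R)%:E)%E /\
    ((2 * n <= d x e)%N ->
       ((n%:R - 3 * delta)%:E <= lp_norm_pow p (\1_(Fset d delta e x k n) : V -> R))%E).
Proof.
move=> adj_simpl _ dP bounded thin p_ge1.
have [D delta_le_D] : exists D : nat, delta <= D%:R.
  by exists (Num.truncn delta).+1; apply/ltW/truncnS_gt.
have [N ballN] := bounded (2 * D)%N.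
exists (N * (D + 5))%:R => x n k n_gt0 kn.
rewrite lp_norm_pow_indic ?(lt_le_trans ltr01 p_ge1) //; split.
  apply: (le_trans (esum_Fset_le e adj_simpl dP thin delta_le_D ballN x kn)).
  by rewrite -natrM lee_fin ler_nat; nia.
exact: (esum_Fset_ge adj_simpl dP thin k).
Qed.
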